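(* Let $(R,\mathfrak{m},k)$ be a commutative Noetherian local ring and let $\mathbf{F}$ be a minimal free resolution of $k$ over $R$. Then $\mathfrak{m}^*\operatorname{H}_n(\operatorname{lin}^R(\mathbf{F}))=0$ for all $n$, where $\mathfrak{m}^*$ is the homogeneous maximal ideal of $R^{\mathsf g}$.
   Context: $R^{\mathsf g}=\bigoplus_{i\ge0}\mathfrak{m}^i/\mathfrak{m}^{i+1}$ is the associated graded ring and $\mathfrak{m}^*=\bigoplus_{i\ge1}\mathfrak{m}^i/\mathfrak{m}^{i+1}$. A minimal free resolution $\mathbf{F}:\cdots\to F_n\xrightarrow{\partial_n}F_{n-1}\to\cdots\to F_0\to0$ consists of finitely generated free modules with $\partial(F_i)\subseteq\mathfrak{m}F_{i-1}$. The linear part $\operatorname{lin}^R(\mathbf{F})$ is the associated graded complex of the filtration $(\mathfrak{F}^p\mathbf{F})_i=\mathfrak{m}^{p-i}F_i$ ($\mathfrak{m}^j=R$ for $j\le0$); it is a complex of graded free $R^{\mathsf g}$-modules with $\operatorname{lin}^R_n(\mathbf{F})=F_n^{\mathsf g}(-n)$, $F_n^{\mathsf g}=\bigoplus_{i\ge0}\mathfrak{m}^iF_n/\mathfrak{m}^{i+1}F_n$, and differential sending the class of $x\in\mathfrak{m}^iF_n$ to the class of $\partial(x)$ in $\mathfrak{m}^{i+1}F_{n-1}/\mathfrak{m}^{i+2}F_{n-1}$. *)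

From HB Require Import structures.
From mathcomp Require Import all_boot all_order all_algebra.
Set Implicit Arguments. Unset Strict Implicit. Unset Printing Implicit Defensive.
Import GRing.Theory.
Local Open Scope ring_scope.

Section CommAlg.
Variable R : comNzRingType.

Inductive idgen (S : R -> Prop) : R -> Prop :=
| idgen_gen x : S x -> idgen S x
| idgen0 : idgen S 0
| idgenD x y : idgen S x -> idgen S y -> idgen S (x + y)
| idgenM r x : idgen S x -> idgen S (r * x).

Definition is_ideal (I : R -> Prop) : Prop :=
  I 0 /\ (forall x y, I x -> I y -> I (x + y)) /\ (forall r x, I x -> I (r * x)).

Definition maximal_ideal (I : R -> Prop) : Prop :=
  is_ideal I /\ ~ I 1 /\
  (forall J, is_ideal J -> ~ J 1 -> (forall x, I x -> J x) -> forall x, J x -> I x).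

Definition local_ring (m : R -> Prop) : Prop :=
  maximal_ideal m /\ (forall M, maximal_ideal M -> forall x, M x <-> m x).

Definition noetherian : Prop :=
  forall I, is_ideal I -> exists s : seq R, forall x, I x <-> idgen (fun y => y \in s) x.

Fixpoint mpow (m : R -> Prop) (i : nat) : R -> Prop :=
  match i with
  | 0 => fun _ => True
  | i'.+1 => idgen (fun z => exists a c, m a /\ mpow m i' c /\ z = a * c)
  end.

Definition mx_in (I : R -> Prop) p q (A : 'M[R]_(p, q)) : Prop :=
  forall i j, I (A i j).

(* A free resolution  ... -> F_{n+1} --d n--> F_n -> ... -> F_0  with
   F_n = R^(b n) (row vectors, maps act by right multiplication: v |-> v *m d n),
   so d n represents \partial_{n+1}. *)
Definition is_min_free_resolution_of_residue (m : R -> Prop) (b : nat -> nat)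
    (d : forall n, 'M[R]_(b n.+1, b n)) : Prop :=
  (forall n, d n.+1 *m d n = 0) /\
  (forall n (v : 'rV[R]_(b n.+1)), v *m d n = 0 -> exists u, v = u *m d n.+1) /\
  (* H_0 = coker(d 0) is isomorphic to k = R/m: an R-linear augmentation
     F_0 -> R/m (given by a column e, reduced mod m) that is onto, with kernel im(d 0) *)
  (exists e : 'cV[R]_(b 0),
     (forall r : R, exists v : 'rV[R]_(b 0), m ((v *m e) 0 0 - r)) /\
     (forall v : 'rV[R]_(b 0), m ((v *m e) 0 0) <-> exists u, v = u *m d 0)) /\
  (forall n, mx_in m (d n)).

(* x in m^i F_n represents a homogeneous element of lin_n(F) = F_n^g(-n)
   (internal component m^i F_n / m^(i+1) F_n); it is a cycle of lin(F) iff
   \partial_n(x) lies in m^(i+2) F_(n-1) (no condition for n = 0). *)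
Definition lin_cycle (m : R -> Prop) (b : nat -> nat)
    (d : forall n, 'M[R]_(b n.+1, b n)) (n i : nat) : 'rV[R]_(b n) -> Prop :=
  match n return 'rV[R]_(b n) -> Prop with
  | 0 => fun _ => True
  | n'.+1 => fun x => mx_in (mpow m (i + 2)) (x *m d n')
  end.

End CommAlg.
Arguments is_min_free_resolution_of_residue {R} m b d.
Arguments lin_cycle {R} m b d n i _.

(* Every r in m annihilates k, so multiplication by r on the resolution F of k
   lifts the zero map of k and is therefore null-homotopic: r = d h + h d.
   If x lies in m^k F_n and d x in m^(k+2) F_(n-1), then r x = d (h x) + h (d x)
   with h x in m^k F_(n+1) and h (d x) in m^(k+2) F_n, so r kills the class of
   x in H(lin F).  An element of m^(j+1) is a combination of products r c with
   r in m and c in m^j, and c x is again a cycle of lin F, j degrees higher. *)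
From mathcomp Require Import all_boot all_order all_algebra.
Set Implicit Arguments. Unset Strict Implicit.
Import GRing.Theory.
Local Open Scope ring_scope.

Section Ideals.
Variable R : comNzRingType.
Implicit Types (I : R -> Prop) (m : R -> Prop).

Lemma idgen_ideal (S : R -> Prop) : is_ideal (idgen S).
Proof. by split; [exact: idgen0 | split; [exact: idgenD | exact: idgenM]]. Qed.

Lemma idgen_min I (S : R -> Prop) :
  is_ideal I -> (forall x, S x -> I x) -> forall x, idgen S x -> I x.
Proof. by move=> [I0 [ID IM]] SI x; elim=> *; auto. Qed.

Lemma mpow_ideal m k : is_ideal (mpow m k).
Proof. by case: k => [|k] /=; [split | exact: idgen_ideal]. Qed.

Lemma ideal_mulr I x r : is_ideal I -> I x -> I (x * r).
Proof. by move=> [_ [_ IM]] Ix; rewrite mulrC; apply: IM. Qed.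

Lemma mpow_mul m p q a c :
  mpow m p a -> mpow m q c -> mpow m (p + q) (a * c).
Proof.
elim: p a => [|p IHp] a /= Ha Hc.
  by rewrite add0n mulrC; apply: ideal_mulr => //; apply: mpow_ideal.
elim: Ha => [_ [a1 [c1 [Ha1 [Hc1 ->]]]] | | x y _ Hx _ Hy | s x _ Hx].
- by apply: idgen_gen; exists a1, (c1 * c); rewrite mulrA; split; last split; auto.
- by rewrite mul0r; apply: idgen0.
- by rewrite mulrDl; apply: idgenD.
- by rewrite -mulrA; apply: idgenM.
Qed.

Variables p q : nat.
Implicit Type A : 'M[R]_(p, q).

Lemma mx_in0 I : is_ideal I -> mx_in I (0 : 'M_(p, q)).
Proof. by move=> [I0 _] i j; rewrite mxE. Qed.

Lemma mx_inD I A B : is_ideal I -> mx_in I A -> mx_in I B -> mx_in I (A + B).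
Proof. by move=> [_ [ID _]] HA HB i j; rewrite mxE; apply: ID. Qed.

Lemma mx_inZ I c A : is_ideal I -> mx_in I A -> mx_in I (c *: A).
Proof. by move=> [_ [_ IM]] HA i j; rewrite mxE; apply: IM. Qed.

Lemma mx_inMl I s A (B : 'M_(q, s)) : is_ideal I -> mx_in I A -> mx_in I (A *m B).
Proof.
move=> II HA i j; rewrite mxE; apply: (big_ind I); first by case: II.
  by case: II => _ [ID _]; apply: ID.
by move=> k _; apply: ideal_mulr.
Qed.

Lemma mx_in_mpowZ m k l c A :
  mpow m k c -> mx_in (mpow m l) A -> mx_in (mpow m (k + l)) (c *: A).
Proof. by move=> Hc HA i j; rewrite mxE; apply: mpow_mul. Qed.

End Ideals.

Lemma lift_rows_mx (R : comNzRingType) p n k (D : 'M[R]_(n, k)) (T : 'M_(p, k)) :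
  (forall i, exists u, row i T = u *m D) -> exists U, U *m D = T.
Proof.
move=> liftT; have [f Hf] := fin_all_exists liftT.
by exists (\matrix_i f i); apply/row_matrixP => i; rewrite row_mul rowK Hf.
Qed.

Section Resolution.
Variables (R : comNzRingType) (m : R -> Prop) (b : nat -> nat).
Variable d : forall n, 'M[R]_(b n.+1, b n).
Hypothesis m_ideal : is_ideal m.
Hypothesis resF : is_min_free_resolution_of_residue m b d.

Lemma resolution_lift n p (T : 'M_(p, b n.+1)) :
  T *m d n = 0 -> exists U, U *m d n.+1 = T.
Proof.
move=> Td0; apply: lift_rows_mx => i; have [_ [exactF _]] := resF.
by apply: exactF; rewrite -row_mul Td0; apply/rowP => j; rewrite !mxE.
Qed.

Section NullHomotopy.
Variable r : R.
Hypothesis m_r : m r.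

Lemma scalar_homotopy0 : exists h : 'M_(b 0, b 1), h *m d 0 = r%:M.
Proof.
apply: lift_rows_mx => i; have [_ [_ [[e [_ kerF]] _]]] := resF.
by apply/kerF; rewrite -row_mul mul_scalar_mx !mxE; apply: ideal_mulr.
Qed.

Lemma scalar_homotopy n : exists (h : 'M_(b n, b n.+1)) (h' : 'M_(b n.+1, b n.+2)),
  d n *m h + h' *m d n.+1 = r%:M.
Proof.
have [dd0 _] := resF.
have extend k (g : 'M_(b k.+1, b k.+1)) : g *m d k = r *: d k ->
    exists h' : 'M_(b k.+1, b k.+2), g + h' *m d k.+1 = r%:M.
  move=> gd; have [h' Hh'] : exists h', h' *m d k.+1 = r%:M - g.
    by apply: resolution_lift; rewrite mulmxBl gd mul_scalar_mx subrr.
  by exists h'; rewrite Hh' addrC subrK.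
elim: n => [|n [h [h' Hh]]].
  have [h0 H0] := scalar_homotopy0; exists h0; apply: extend.
  by rewrite -mulmxA H0 mul_mx_scalar.
exists h'; apply: extend; rewrite -mulmxA.
have -> : h' *m d n.+1 = r%:M - d n *m h by rewrite -Hh addrC addKr.
by rewrite mulmxBr mul_mx_scalar mulmxA dd0 mul0mx subr0.
Qed.

End NullHomotopy.

(* [a] [x] = 0 in H(lin F), reading a in degree 1 and x in internal degree k. *)
Definition lin_ann k n (x : 'rV[R]_(b n)) (a : R) : Prop :=
  exists y : 'rV_(b n.+1),
    mx_in (mpow m k) y /\ mx_in (mpow m (k + 2)) (a *: x - y *m d n).

Lemma lin_ann_ideal k n (x : 'rV[R]_(b n)) : is_ideal (lin_ann k x).
Proof.
have [Ik Ik2] := (mpow_ideal m k, mpow_ideal m (k + 2)).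
split; last split.
- by exists 0; rewrite scale0r mul0mx subrr; split; apply: mx_in0.
- move=> a1 a2 [y1 [Hy1 H1]] [y2 [Hy2 H2]]; exists (y1 + y2); split.
    exact: mx_inD.
  by rewrite scalerDl mulmxDl opprD addrACA; apply: mx_inD.
- move=> s a [y [Hy H]]; exists (s *: y); split; first exact: mx_inZ.
  by rewrite -scalerA -scalemxAl -scalerBr; apply: mx_inZ.
Qed.

Lemma m_sub_lin_ann k n (x : 'rV[R]_(b n)) r :
  m r -> mx_in (mpow m k) x -> lin_cycle m b d n k x -> lin_ann k x r.
Proof.
move=> m_r; have [Ik Ik2] := (mpow_ideal m k, mpow_ideal m (k + 2)).
case: n x => [|n] x Hx cycle_x.
  have [h Hh] := scalar_homotopy0 m_r; exists (x *m h); split; first exact: mx_inMl.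
  by rewrite -mulmxA Hh mul_mx_scalar subrr; apply: mx_in0.
have [h [h' Hh]] := scalar_homotopy m_r n; exists (x *m h'); split.
  exact: mx_inMl.
by rewrite -mul_mx_scalar -Hh -mulmxA -mulmxBr addrK mulmxA; apply: mx_inMl.
Qed.

Lemma lin_cycleZ n k l c (x : 'rV[R]_(b n)) :
  mpow m l c -> lin_cycle m b d n k x -> lin_cycle m b d n (l + k) (c *: x).
Proof.
case: n x => [//|n] x Hc /= cycle_x.
by rewrite -scalemxAl -addnA; apply: mx_in_mpowZ.
Qed.

End Resolution.

Theorem corollary2p5 (R : comNzRingType) (m : R -> Prop) (b : nat -> nat)
    (d : forall n, 'M[R]_(b n.+1, b n)) :
  noetherian R -> local_ring m -> is_min_free_resolution_of_residue m b d ->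
  forall (n i j : nat) (a : R) (x : 'rV[R]_(b n)),
    (0 < j)%N -> mpow m j a -> mx_in (mpow m i) x -> lin_cycle m b d n i x ->
    exists y : 'rV[R]_(b n.+1),
      mx_in (mpow m (i + j - 1)) y /\
      mx_in (mpow m (i + j + 1)) (a *: x - y *m d n).
Proof.
move=> _ [[m_ideal _] _] resF n i [//|j] a x _ /= Ha Hx cycle_x.
rewrite addnS subn1 addSnnS.
apply: (idgen_min (lin_ann_ideal m d (i + j) x) _ Ha) => _ [r [c [m_r [Hc ->]]]].
rewrite /lin_ann -scalerA; apply: m_sub_lin_ann => //.
  by rewrite addnC; apply: mx_in_mpowZ.
by rewrite addnC; apply: lin_cycleZ.
Qed.
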